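(* Let $k\geq 3$ be an integer and let $m$ be an odd positive integer such that $m\notin\mathcal F(k)$. Then $k-1\geq 2^{\delta(m)}$, where $\delta(m)=\lceil\log_2(m/3)\rceil$.
   Context: The Thue–Morse word is $\mathbf t=\mathbf t_1\mathbf t_2\cdots$ where $\mathbf t_i\in\{0,1\}$ has the parity of the number of $1$'s in the binary expansion of $i-1$. For positive integers $\alpha\le\beta$, write $\langle\alpha,\beta\rangle=\mathbf t_\alpha\mathbf t_{\alpha+1}\cdots\mathbf t_\beta$. A $k$-anti-power is a word $w_1w_2\cdots w_k$ where $w_1,\dots,w_k$ are pairwise distinct words all of the same length. $\mathcal F(k)$ is the set of odd positive integers $m$ such that the prefix $\langle 1,km\rangle$ of $\mathbf t$ is a $k$-anti-power, i.e. such that the blocks $\langle nm+1,(n+1)m\rangle$, $0\le n\le k-1$, are pairwise distinct. *)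

From mathcomp Require Import all_boot all_order all_algebra.
Set Implicit Arguments. Unset Strict Implicit. Unset Printing Implicit Defensive.
Import GRing.Theory Num.Theory.

Fixpoint popcount_aux (fuel n : nat) : nat :=
  match fuel with
  | 0 => 0
  | fuel'.+1 => if n is 0 then 0 else odd n + popcount_aux fuel' n./2
  end.
Definition popcount (n : nat) : nat := popcount_aux n n.

(* 0-indexed Thue-Morse: tm i = t_{i+1} = parity of popcount i. *)
Definition tm (i : nat) : bool := odd (popcount i).

(* Block <nm+1,(n+1)m> of t (1-indexed), i.e. 0-indexed positions nm..nm+m-1. *)
Definition tm_block (m n : nat) : seq bool := mkseq (fun j => tm (n * m + j)) m.

Definition inF (k m : nat) : Prop :=
  odd m /\ 0 < m /\ uniq [seq tm_block m n | n <- iota 0 k].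

Lemma deltaN_ex (m : nat) : exists d, m <= 3 * 2 ^ d.
Proof. exists m. apply: leq_trans (ltnW (ltn_expl m (isT : 1 < 2))) _.
  by rewrite leq_pmull. Qed.
Definition deltaN (m : nat) : nat := ex_minn (deltaN_ex m).

(* delta m = ceil(log2(m/3)) = least integer d with m <= 3 * 2^d (for m >= 1).
   For m >= 2 this is nonnegative (3 * 2^-1 < 2), for m = 1 it equals -1. *)
Definition delta (m : nat) : int := if m == 1%N then (-1)%R else Posz (deltaN m).

From mathcomp Require Import all_boot all_order all_algebra.
From mathcomp Require Import zify.
Import Order.TTheory GRing.Theory Num.Theory.

(* Thue-Morse satisfies t(2x+b) = t(x) xor b and contains no cube
   bbb, so a factor of length at least 4 determines the parity of its position.
   Halving the positions and inducting, two occurrences of a factor of length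
   greater than 3 * 2^j lie at positions congruent modulo 2^(j+1).  Two equal
   blocks of odd length m > 3 * 2^j at indices a < b would therefore force
   2^(j+1) to divide (b - a) m, hence b - a, so the first 2^(j+1) blocks are
   pairwise distinct. *)

Lemma popcount_aux_fuel f1 f2 n :
  n <= f1 -> n <= f2 -> popcount_aux f1 n = popcount_aux f2 n.
Proof.
elim: f1 f2 n => [|f1 IH] [|f2] [|n] //= le1 le2.
have := odd_double_half n.+1; rewrite -muln2 => halfE.
by congr (_ + _); apply: IH; lia.
Qed.

Lemma popcountE n : 0 < n -> popcount n = odd n + popcount n./2.
Proof.
case: n => // n _; rewrite /popcount [LHS]/=; congr (_ + _).
by apply: popcount_aux_fuel => //; have := odd_double_half n.+1; lia.
Qed.

Lemma popcount_doubleD x (b : bool) : popcount (2 * x + b) = b + popcount x.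
Proof.
have [->|x_gt0] := posnP x; first by case: b.
have halfE : (2 * x + b)./2 = x by rewrite mul2n addnC half_bit_double.
have oddE : odd (2 * x + b) = b by rewrite oddD oddM; case: (b : bool).
by rewrite popcountE ?halfE ?oddE //; lia.
Qed.

Lemma tm_doubleD x (b : bool) : tm (2 * x + b) = tm x (+) b.
Proof. by rewrite /tm popcount_doubleD oddD addbC; case: b. Qed.

Lemma tm_double x : tm (2 * x) = tm x.
Proof. by rewrite -[2 * x]addn0 (tm_doubleD x false) addbF. Qed.

Lemma tm_doubleS x : tm (2 * x + 1) = ~~ tm x.
Proof. by rewrite (tm_doubleD x true) addbT. Qed.

Lemma tm_cubefree x : ~ (tm x = tm (x + 1) /\ tm (x + 1) = tm (x + 2)).
Proof.
rewrite -[x](odd_double_half x) -mul2n; set p := x./2.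
case: (odd x) => [] [E1 E2]; rewrite ?add0n in E1 E2.
- move: E2; have -> : 1 + 2 * p + 1 = 2 * p.+1 by lia.
  have -> : 1 + 2 * p + 2 = 2 * p.+1 + 1 by lia.
  by rewrite tm_double tm_doubleS; case: (tm _).
- by move: E1; rewrite tm_double tm_doubleS; case: (tm p).
Qed.

Lemma odd_eq_of_tm_window4 i i' :
  (forall x, x < 4 -> tm (i + x) = tm (i' + x)) -> odd i = odd i'.
Proof.
(* At an even position the window reads t p, ~t p, t(p+1), ~t(p+1); matching
   it at an odd position 2q+1 forces t q = t(q+1) = t(q+2). *)
have mismatch p q : ~ (forall x, x < 4 -> tm (2 * p + x) = tm (2 * q + 1 + x)).
  move=> E; have := E 0 isT; have := E 1 isT; have := E 2 isT; have := E 3 isT.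
  have -> : 2 * p + 0 = 2 * p by lia.
  have -> : 2 * p + 2 = 2 * (p + 1) by lia.
  have -> : 2 * p + 3 = 2 * (p + 1) + 1 by lia.
  have -> : 2 * q + 1 + 0 = 2 * q + 1 by lia.
  have -> : 2 * q + 1 + 1 = 2 * (q + 1) by lia.
  have -> : 2 * q + 1 + 2 = 2 * (q + 1) + 1 by lia.
  have -> : 2 * q + 1 + 3 = 2 * (q + 2) by lia.
  rewrite !tm_double !tm_doubleS => E3 E2 E1 E0.
  apply: (tm_cubefree q).
  by move: E0 E1 E2 E3; case: (tm p) (tm q) (tm (p + 1)) (tm (q + 1)) (tm (q + 2))
    => [] [] [] [] [].
move=> E; have iE := odd_double_half i; have i'E := odd_double_half i'.
case: (odd i) (odd i') iE i'E => [] [] //= iE i'E; exfalso.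
- apply: (mismatch i'./2 i./2) => x /E.
  have -> : i + x = 2 * i./2 + 1 + x by lia.
  by have -> : i' + x = 2 * i'./2 + x by lia.
- apply: (mismatch i./2 i'./2) => x /E.
  have -> : i + x = 2 * i./2 + x by lia.
  by have -> : i' + x = 2 * i'./2 + 1 + x by lia.
Qed.

Lemma tm_window_eq_mod {j i i' L} : 3 * 2 ^ j < L ->
  (forall x, x < L -> tm (i + x) = tm (i' + x)) -> i = i' %[mod 2 ^ j.+1].
Proof.
elim: j i i' L => [|j IH] i i' L ltL E.
  rewrite !modn2; congr (nat_of_bool _).
  by apply: odd_eq_of_tm_window4 => x lt_x4; apply: E; lia.
have ltL4 : 3 < L by move: ltL; rewrite expnS; have := expn_gt0 2 j; lia.
have oddE : odd i = odd i'.
  by apply: odd_eq_of_tm_window4 => x lt_x4; apply: E; lia.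
have iE : odd i + 2 * i./2 = i by rewrite mul2n odd_double_half.
have i'E : odd i + 2 * i'./2 = i' by rewrite oddE mul2n odd_double_half.
have halvesE : i./2 = i'./2 %[mod 2 ^ j.+1].
  apply: (IH _ _ (uphalf L)); first by move: ltL; rewrite expnS uphalfE; lia.
  move=> x lt_x; have lt_2x : 2 * x < L by move: lt_x; rewrite uphalfE; lia.
  have := E _ lt_2x.
  have -> : i + 2 * x = 2 * (i./2 + x) + odd i by lia.
  have -> : i' + 2 * x = 2 * (i'./2 + x) + odd i by lia.
  by rewrite !tm_doubleD => /addIb.
rewrite -iE -i'E; apply/eqP.
by rewrite eqn_modDl expnS -!muln_modr halvesE.
Qed.

Lemma tm_block_neq {m j a b} : odd m -> 3 * 2 ^ j < m -> a < b -> b < 2 ^ j.+1 ->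
  tm_block m a <> tm_block m b.
Proof.
move=> odd_m ltm lt_ab lt_b blockE.
have agree x : x < m -> tm (a * m + x) = tm (b * m + x).
  by move=> lt_x; have := congr1 (nth false ^~ x) blockE; rewrite !nth_mkseq.
have /eqP := tm_window_eq_mod ltm agree.
rewrite eq_sym eqn_mod_dvd; last by rewrite leq_mul2r ltnW ?orbT.
rewrite -mulnBl Gauss_dvdl; last by rewrite coprime_pexpl // coprime_sym coprimen2.
by move/dvdn_leq; rewrite subn_gt0 lt_ab => /(_ isT); lia.
Qed.

Lemma uniq_tm_blocks {m j k} : odd m -> 3 * 2 ^ j < m -> k <= 2 ^ j.+1 ->
  uniq [seq tm_block m n | n <- iota 0 k].
Proof.
move=> odd_m ltm le_k; rewrite map_inj_in_uniq ?iota_uniq // => a b.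
rewrite !mem_iota !add0n => lt_a lt_b blockE.
case: (ltngtP a b) => // [lt_ab|lt_ba]; exfalso.
- by apply: (tm_block_neq odd_m ltm lt_ab _ blockE); lia.
- by apply: (tm_block_neq odd_m ltm lt_ba _ (esym blockE)); lia.
Qed.

Local Open Scope ring_scope.

Theorem corollary1 (k m : nat) :
  (3 <= k)%N -> odd m -> (0 < m)%N -> ~ inF k m ->
  (2%:Q) ^ (delta m) <= ((k - 1)%N)%:Q.
Proof.
move=> k3 odd_m m_gt0 notF.
rewrite /delta; case: eqP => [_|m_neq1].
  by rewrite exprN1; apply: (@le_trans _ _ 1); rewrite ?invf_le1 // ler1n; lia.
rewrite -exprnP -[2%:Q]/((2%N)%:R) -natrX ler_nat /deltaN.
case: ex_minnP => [[|j] le_m minimal]; first by rewrite expn0; lia.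
rewrite leqNgt; apply/negP => lt_k; apply: notF; split=> //; split=> //.
apply: (uniq_tm_blocks (j := j)) => //; last by lia.
by rewrite ltnNge; apply/negP => /minimal; lia.
Qed.
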